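(* Let $(X,T)$ be a topological dynamical system and let $K\subset X$ be a compact set. Then $K$ has bounded topological complexity with respect to $\{d_n\}$ if and only if $K$ is equicontinuous.
   Context: A topological dynamical system (t.d.s.) $(X,T)$ consists of a compact metric space $(X,d)$ and a continuous map $T\colon X\to X$. For $n\in\mathbb{N}$ and $x,y\in X$ let $d_n(x,y)=\max\{d(T^ix,T^iy)\colon 0\le i\le n-1\}$, and $B_{d_n}(x,\varepsilon)=\{y\in X\colon d_n(x,y)<\varepsilon\}$. For $K\subset X$ let $\mathrm{span}_K(n,\varepsilon)=\min\{\#(F)\colon F\subset K,\ K\subset\bigcup_{x\in F}B_{d_n}(x,\varepsilon)\}$. A subset $K$ has bounded topological complexity with respect to $\{d_n\}$ if for every $\varepsilon>0$ there is a positive integer $C$ with $\mathrm{span}_K(n,\varepsilon)\le C$ for all $n\ge1$. A subset $K\subset X$ is equicontinuous if for every $\varepsilon>0$ there is $\delta>0$ such that $d(T^nx,T^ny)<\varepsilon$ for all $n\ge 0$ and all $x,y\in K$ with $d(x,y)<\delta$. *)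

From Stdlib Require Import Reals List.
Open Scope R_scope.

Section Defs.
Context {X : Type} (d : X -> X -> R).

Definition is_metric : Prop :=
  (forall x y, 0 <= d x y) /\
  (forall x y, d x y = 0 <-> x = y) /\
  (forall x y, d x y = d y x) /\
  (forall x y z, d x z <= d x y + d y z).

Definition open_set (U : X -> Prop) : Prop :=
  forall x, U x -> exists r, 0 < r /\ forall y, d x y < r -> U y.

Definition compact_set (K : X -> Prop) : Prop :=
  forall (I : Type) (U : I -> X -> Prop),
    (forall i, open_set (U i)) ->
    (forall x, K x -> exists i, U i x) ->
    exists l : list I, forall x, K x -> exists i, In i l /\ U i x.

Definition compact_space : Prop := compact_set (fun _ => True).

Definition continuous_map (T : X -> X) : Prop :=
  forall x eps, 0 < eps -> exists delta, 0 < delta /\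
    forall y, d x y < delta -> d (T x) (T y) < eps.

Fixpoint iter (T : X -> X) (i : nat) (x : X) : X :=
  match i with O => x | S k => T (iter T k x) end.

(** d_n(x,y) = max_{0 <= i <= n-1} d(T^i x, T^i y)  (d_0 = 0, unused) *)
Fixpoint dn (T : X -> X) (n : nat) (x y : X) : R :=
  match n with
  | O => 0
  | S k => Rmax (dn T k x y) (d (iter T k x) (iter T k y))
  end.

Definition bowen_ball (T : X -> X) (n : nat) (x : X) (eps : R) (y : X) : Prop :=
  dn T n x y < eps.

(** span_K(n,eps) <= C : there is a finite F subset of K, #F <= C,
    with K covered by the Bowen balls centred at F *)
Definition span_le (T : X -> X) (K : X -> Prop) (n : nat) (eps : R) (C : nat) : Prop :=
  exists F : list X,
    (forall x, In x F -> K x) /\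
    (forall y, K y -> exists x, In x F /\ bowen_ball T n x eps y) /\
    (length F <= C)%nat.

Definition bounded_top_complexity (T : X -> X) (K : X -> Prop) : Prop :=
  forall eps, 0 < eps -> exists C : nat, (0 < C)%nat /\
    forall n, (1 <= n)%nat -> span_le T K n eps C.

Definition equicontinuous_set (T : X -> X) (K : X -> Prop) : Prop :=
  forall eps, 0 < eps -> exists delta, 0 < delta /\
    forall (n : nat) x y, K x -> K y -> d x y < delta ->
      d (iter T n x) (iter T n y) < eps.

End Defs.

(** Equicontinuity gives bounded complexity at once: a finite [delta]-net of
    [K] for [d] is an [eps]-net for every [d_n].

    Conversely, suppose [K] has bounded complexity but [T] is not
    equicontinuous on [K] at some [z]. Points of [K] arbitrarily close to [z]
    eventually move [eps] away from its orbit; since every [d_N] is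
    continuous for [d], such a point can be chosen [eps/2]-close to [z] in
    the current [d_N], so inductively one gets arbitrarily long lists in [K]
    that are [eps/2]-separated for a single [d_N]. A cover by [d_N]-balls of
    radius [eps/4] contains at most one point of such a list per ball, which
    contradicts the uniform bound on [span_K(N, eps/4)]. Equicontinuity at
    each point of [K] then becomes uniform by a Lebesgue number argument. *)
From Pilot Require Import Defs.
From Stdlib Require Import Reals List Lra Lia Classical.
Open Scope R_scope.

Lemma list_pos_lower_bound (A : Type) (f : A -> R) (l : list A) :
  (forall a, In a l -> 0 < f a) ->
  exists m, 0 < m /\ forall a, In a l -> m <= f a.
Proof.
  induction l as [|a l IHl]; intros Hpos.
  - exists 1; split; [lra | intros _ []].
  - destruct IHl as [m [Hm Hml]]; [intros b Hb; apply Hpos; right; exact Hb|].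
    exists (Rmin m (f a)); split.
    + apply Rmin_glb_lt; [exact Hm | apply Hpos; left; reflexivity].
    + intros b [<- | Hb]; [apply Rmin_r|].
      eapply Rle_trans; [apply Rmin_l | exact (Hml b Hb)].
Qed.

Lemma pigeonhole_cover (A : Type) (Sep Cov : A -> A -> Prop) :
  (forall c w v, Cov c w -> Cov c v -> ~ Sep w v) ->
  forall L F, ForallOrdPairs Sep L ->
  (forall w, In w L -> exists c, In c F /\ Cov c w) ->
  (length L <= length F)%nat.
Proof.
  intros Hcov L; induction L as [|a L IHL]; intros F Hsep HL; simpl; [lia|].
  inversion Hsep as [|? ? Ha HsepL]; subst.
  destruct (HL a (or_introl eq_refl)) as [c [Hc Hca]].
  destruct (in_split c F Hc) as [F1 [F2 ->]].
  rewrite length_app; simpl.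
  enough (length L <= length (F1 ++ F2))%nat by (rewrite length_app in *; lia).
  apply IHL; [exact HsepL|].
  intros w Hw; destruct (HL w (or_intror Hw)) as [c' [Hc' Hcw]].
  apply in_app_iff in Hc'; destruct Hc' as [Hc' | [Hcc' | Hc']].
  - exists c'; split; [apply in_app_iff; left|]; assumption.
  - subst c'; exfalso; apply (Hcov c a w Hca Hcw).
    exact (proj1 (Forall_forall _ _) Ha w Hw).
  - exists c'; split; [apply in_app_iff; right|]; assumption.
Qed.

Lemma ForallOrdPairs_impl (A : Type) (R1 R2 : A -> A -> Prop) l :
  (forall a b, R1 a b -> R2 a b) -> ForallOrdPairs R1 l -> ForallOrdPairs R2 l.
Proof.
  intros H12 H1; induction H1 as [|a l Ha _ IH]; constructor; [|exact IH].
  eapply Forall_impl; [apply H12 | exact Ha].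
Qed.

Section BowenDistance.
Variables (X : Type) (d : X -> X -> R) (T : X -> X).
Hypothesis d_sym : forall x y, d x y = d y x.
Hypothesis d_triangle : forall x y z, d x z <= d x y + d y z.
Hypothesis T_continuous : continuous_map d T.

Lemma dn_sym n x y : dn d T n x y = dn d T n y x.
Proof. induction n as [|n IHn]; simpl; [|rewrite IHn, d_sym]; reflexivity. Qed.

Lemma dn_triangle n x y z : dn d T n x z <= dn d T n x y + dn d T n y z.
Proof.
  induction n as [|n IHn]; simpl; [lra|].
  apply Rmax_lub.
  - eapply Rle_trans; [exact IHn|]; apply Rplus_le_compat; apply Rmax_l.
  - eapply Rle_trans; [apply d_triangle|]; apply Rplus_le_compat; apply Rmax_r.
Qed.

Lemma dn_monotone m n x y : (m <= n)%nat -> dn d T m x y <= dn d T n x y.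
Proof.
  induction 1 as [|n _ IH]; [apply Rle_refl|].
  eapply Rle_trans; [exact IH | apply Rmax_l].
Qed.

Lemma iter_le_dn n i x y :
  (i < n)%nat -> d (iter T i x) (iter T i y) <= dn d T n x y.
Proof.
  intros Hi; eapply Rle_trans; [apply Rmax_r | apply (dn_monotone (S i) n); lia].
Qed.

Lemma dn_lt_of_iter_lt n x y eps : 0 < eps ->
  (forall i, d (iter T i x) (iter T i y) < eps) -> dn d T n x y < eps.
Proof.
  intros Heps Hlt; induction n as [|n IHn]; simpl; [exact Heps|].
  apply Rmax_lub_lt; [exact IHn | apply Hlt].
Qed.

Lemma iter_continuous i x eps : 0 < eps -> exists delta, 0 < delta /\
  forall y, d x y < delta -> d (iter T i x) (iter T i y) < eps.
Proof.
  revert eps; induction i as [|i IHi]; intros eps Heps; [exists eps; auto|].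
  destruct (T_continuous (iter T i x) eps Heps) as [delta1 [Hdelta1 H1]].
  destruct (IHi delta1 Hdelta1) as [delta [Hdelta H]].
  exists delta; split; [exact Hdelta | intros y Hy; apply H1, H, Hy].
Qed.

Lemma dn_continuous n x eps : 0 < eps -> exists delta, 0 < delta /\
  forall y, d x y < delta -> dn d T n x y < eps.
Proof.
  intros Heps; induction n as [|n IHn]; [exists 1; split; [lra | intros; exact Heps]|].
  destruct IHn as [delta1 [Hdelta1 H1]].
  destruct (iter_continuous n x eps Heps) as [delta2 [Hdelta2 H2]].
  exists (Rmin delta1 delta2); split; [apply Rmin_glb_lt; assumption|].
  intros y Hy; apply Rmax_lub_lt.
  - apply H1; eapply Rlt_le_trans; [exact Hy | apply Rmin_l].
  - apply H2; eapply Rlt_le_trans; [exact Hy | apply Rmin_r].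
Qed.

End BowenDistance.

Section CompactSets.
Variables (X : Type) (d : X -> X -> R) (K : X -> Prop).
Hypothesis d_refl : forall x, d x x = 0.
Hypothesis d_triangle : forall x y z, d x z <= d x y + d y z.
Hypothesis K_compact : compact_set d K.

Lemma ball_open c r : Defs.open_set d (fun y => d c y < r).
Proof.
  intros x Hx; exists (r - d c x); split; [lra|].
  intros y Hy; specialize (d_triangle c x y); lra.
Qed.

Lemma compact_finite_net delta : 0 < delta -> exists F : list X,
  (forall x, In x F -> K x) /\ forall y, K y -> exists x, In x F /\ d x y < delta.
Proof.
  intros Hdelta.
  destruct (K_compact {x : X | K x} (fun c y => d (proj1_sig c) y < delta))
    as [l Hl].
  - intros c; apply ball_open.
  - intros x Kx; exists (exist _ x Kx); simpl; rewrite d_refl; exact Hdelta.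
  - exists (map (@proj1_sig _ _) l); split.
    + intros x Hx; apply in_map_iff in Hx.
      destruct Hx as [[x' Kx'] [<- _]]; exact Kx'.
    + intros y Ky; destruct (Hl y Ky) as [c [Hc Hcy]].
      exists (proj1_sig c); split; [apply in_map, Hc | exact Hcy].
Qed.

Lemma lebesgue_number (U : X -> R -> Prop) :
  (forall z, K z -> exists r, 0 < r /\ U z r) ->
  exists delta, 0 < delta /\
    forall x, K x -> exists c r, U c r /\ d c x + delta < r.
Proof.
  intros HU.
  set (I := {p : X * R | 0 < snd p /\ U (fst p) (snd p)}).
  destruct (K_compact I (fun p y => d (fst (proj1_sig p)) y < snd (proj1_sig p) / 2))
    as [l Hl].
  - intros p; apply ball_open.
  - intros x Kx; destruct (HU x Kx) as [r [Hr Hxr]].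
    exists (exist _ (x, r) (conj Hr Hxr) : I); simpl; rewrite d_refl; lra.
  - destruct (list_pos_lower_bound I (fun p => snd (proj1_sig p) / 2) l)
      as [delta [Hdelta Hmin]].
    { intros p _; pose proof (proj1 (proj2_sig p)); lra. }
    exists delta; split; [exact Hdelta|].
    intros x Kx; destruct (Hl x Kx) as [p [Hp Hpx]].
    specialize (Hmin p Hp); destruct p as [[c r] [Hr Hcr]]; simpl in *.
    exists c, r; split; [exact Hcr | lra].
Qed.

End CompactSets.

Section Complexity.
Variables (X : Type) (d : X -> X -> R) (T : X -> X) (K : X -> Prop).
Hypothesis d_refl : forall x, d x x = 0.
Hypothesis d_sym : forall x y, d x y = d y x.
Hypothesis d_triangle : forall x y z, d x z <= d x y + d y z.
Hypothesis T_continuous : continuous_map d T.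
Hypothesis K_compact : compact_set d K.

Definition stable_at (z : X) (eps r : R) : Prop :=
  forall y, K y -> d z y < r -> forall n, d (iter T n z) (iter T n y) < eps.

Lemma separated_length_le_span n r C L :
  ForallOrdPairs (fun w v => 2 * r < dn d T n w v) L ->
  (forall w, In w L -> K w) -> span_le d T K n r C -> (length L <= C)%nat.
Proof.
  intros Hsep HLK [F [_ [HF HFC]]].
  enough (length L <= length F)%nat by lia.
  apply (pigeonhole_cover X (fun w v => 2 * r < dn d T n w v)
           (fun c w => dn d T n c w < r)); [| exact Hsep |].
  - intros c w v Hcw Hcv Hwv.
    pose proof (dn_triangle X d T d_triangle n w c v) as Htri.
    rewrite (dn_sym X d T d_sym n w c) in Htri; lra.
  - intros w Hw; exact (HF w (HLK w Hw)).
Qed.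

Lemma unstable_separated_lists z eps : 0 < eps ->
  (forall r, 0 < r -> ~ stable_at z eps r) ->
  forall m, exists N L, (1 <= N)%nat /\ length L = m /\
    (forall w, In w L -> K w /\ eps <= dn d T N z w) /\
    ForallOrdPairs (fun w v => eps / 2 < dn d T N w v) L.
Proof.
  intros Heps Hunstable m; induction m as [|m IHm].
  { exists 1%nat, nil; split; [lia|]; split; [reflexivity|].
    split; [intros _ [] | constructor]. }
  destruct IHm as [N [L [HN [HLm [HL Hsep]]]]].
  destruct (dn_continuous X d T T_continuous N z (eps / 2)) as [delta [Hdelta Hnear]];
    [lra|].
  destruct (not_all_ex_not _ _ (Hunstable delta Hdelta)) as [y Hy].
  apply imply_to_and in Hy; destruct Hy as [Ky Hy].
  apply imply_to_and in Hy; destruct Hy as [Hzy Hy].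
  apply not_all_ex_not in Hy; destruct Hy as [k Hk]; apply Rnot_lt_le in Hk.
  set (N' := Nat.max N (S k)).
  assert (HNN' : forall w v, dn d T N w v <= dn d T N' w v)
    by (intros; apply dn_monotone; lia).
  exists N', (y :: L); split; [lia|]; split; [simpl; congruence|]; split.
  - intros w [<- | Hw]; split; [exact Ky | | apply HL, Hw |].
    + eapply Rle_trans; [exact Hk | apply iter_le_dn; lia].
    + eapply Rle_trans; [apply HL, Hw | apply HNN'].
  - constructor.
    + apply Forall_forall; intros v Hv.
      pose proof (Hnear y Hzy) as Hzy'.
      pose proof (proj2 (HL v Hv)) as Hzv.
      pose proof (dn_triangle X d T d_triangle N z y v) as Htri.
      specialize (HNN' y v); lra.
    + eapply ForallOrdPairs_impl; [|exact Hsep].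
      intros w v Hwv; specialize (HNN' w v); lra.
Qed.

Lemma bounded_complexity_stable z eps :
  bounded_top_complexity d T K -> K z -> 0 < eps ->
  exists r, 0 < r /\ stable_at z eps r.
Proof.
  intros Hbtc Kz Heps; apply NNPP; intros Hno.
  assert (Hunstable : forall r, 0 < r -> ~ stable_at z eps r)
    by (intros r Hr Hs; apply Hno; exists r; split; assumption).
  destruct (Hbtc (eps / 4)) as [C [_ HC]]; [lra|].
  destruct (unstable_separated_lists z eps Heps Hunstable (S C))
    as [N [L [HN [HLC [HL Hsep]]]]].
  enough (length L <= C)%nat by lia.
  apply (separated_length_le_span N (eps / 4)); [| intros w Hw; apply HL, Hw | apply HC, HN].
  eapply ForallOrdPairs_impl; [|exact Hsep]; intros w v; lra.
Qed.

Lemma bounded_complexity_equicontinuous :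
  bounded_top_complexity d T K -> equicontinuous_set d T K.
Proof.
  intros Hbtc eps Heps.
  destruct (lebesgue_number X d K d_refl d_triangle K_compact
              (fun c r => stable_at c (eps / 2) r)) as [delta [Hdelta Hleb]].
  { intros z Kz; apply bounded_complexity_stable; [exact Hbtc | exact Kz | lra]. }
  exists delta; split; [exact Hdelta|].
  intros n x y Kx Ky Hxy.
  destruct (Hleb x Kx) as [c [r [Hc Hcx]]].
  pose proof (d_triangle c x y).
  assert (Hx := Hc x Kx ltac:(lra) n).
  assert (Hy := Hc y Ky ltac:(lra) n).
  pose proof (d_triangle (iter T n x) (iter T n c) (iter T n y)) as Htri.
  rewrite (d_sym (iter T n x) (iter T n c)) in Htri; lra.
Qed.

Lemma equicontinuous_bounded_complexity :
  equicontinuous_set d T K -> bounded_top_complexity d T K.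
Proof.
  intros Hequi eps Heps.
  destruct (Hequi eps Heps) as [delta [Hdelta Hclose]].
  destruct (compact_finite_net X d K d_refl d_triangle K_compact delta Hdelta)
    as [F [HFK HF]].
  exists (S (length F)); split; [lia|].
  intros n _; exists F; split; [exact HFK|]; split; [|lia].
  intros y Ky; destruct (HF y Ky) as [x [Hx Hxy]].
  exists x; split; [exact Hx|].
  apply dn_lt_of_iter_lt; [exact Heps|].
  intros i; apply Hclose; [exact (HFK x Hx) | exact Ky | exact Hxy].
Qed.

End Complexity.

Theorem mainTheorem1 (X : Type) (d : X -> X -> R) (T : X -> X)
  (hmetric : is_metric d) (hcompact : compact_space d)
  (hT : continuous_map d T) (K : X -> Prop) (hK : compact_set d K) :
  bounded_top_complexity d T K <-> equicontinuous_set d T K.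
Proof.
  destruct hmetric as (_ & d_zero & d_sym & d_triangle).
  assert (d_refl : forall x, d x x = 0) by (intros x; apply d_zero; reflexivity).
  split.
  - apply bounded_complexity_equicontinuous; assumption.
  - apply equicontinuous_bounded_complexity; assumption.
Qed.
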